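(* Let $G$ be a finite simple graph. Then $G$ is a Tutte-Berge graph if and only if the induced subgraph of $G$ on $D(G)$ has no edges (i.e. $D(G)$ consists of isolated vertices only).
   Context: $\nu(G)$ is the matching number of $G$. For $U\subseteq V(G)$, $N_G(U)$ is the set of vertices of $G$ adjacent to at least one vertex of $U$. A set $T\subseteq V(G)$ is independent if no edge of $G$ has both endpoints in $T$. $G$ is a Tutte-Berge graph if there exists an independent set $T$ of $G$ with $|T| = |N_G(T)| + |V(G)| - 2\nu(G)$. $D(G)$ is the set of vertices of $G$ that are left uncovered by at least one maximum matching of $G$; $A(G)$ is the set of vertices in $V(G)\setminus D(G)$ adjacent to at least one vertex of $D(G)$; $C(G)=V(G)\setminus(D(G)\cup A(G))$ (Gallai–Edmonds decomposition). *)

From mathcomp Require Import all_boot.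
Set Implicit Arguments. Unset Strict Implicit. Unset Printing Implicit Defensive.

(* A finite simple graph: vertex type T (finType) with adjacency relation e,
   assumed symmetric and irreflexive (as hypotheses of the theorem). *)

Section Graph.
Variables (T : finType) (e : rel T).

Definition is_edge (E : {set T}) : bool :=
  [exists x, exists y, (e x y) && (E == [set x; y])].

Definition matching (M : {set {set T}}) : bool :=
  [forall E in M, is_edge E] &&
  [forall E1 in M, forall E2 in M, (E1 != E2) ==> [disjoint E1 & E2]].

Definition nu : nat := \max_(M : {set {set T}} | matching M) #|M|.

Definition max_matching (M : {set {set T}}) : bool := matching M && (#|M| == nu).

Definition covered (M : {set {set T}}) : {set T} := cover M.

Definition nbhd (U : {set T}) : {set T} := [set y | [exists x in U, e x y]].

Definition independent (S : {set T}) : bool :=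
  [forall x in S, forall y in S, ~~ e x y].

(* Tutte-Berge graph: exists independent S with |S| = |N(S)| + |V| - 2 nu,
   written without subtraction as |S| + 2 nu = |N(S)| + |V| (exact over Z). *)
Definition tutte_berge_graph : Prop :=
  exists S : {set T}, independent S /\
    #|S| + 2 * nu = #|nbhd S| + #|T|.

Definition Dset : {set T} :=
  [set x | [exists M, max_matching M && (x \notin covered M)]].

End Graph.

From mathcomp Require Import all_boot zify.
From Stdlib Require Import ClassicalDescription.
Set Implicit Arguments. Unset Strict Implicit. Unset Printing Implicit Defensive.

(* Fix a maximum matching M with cover C, so |C| = 2 nu.  Matching each
   vertex of S :&: C to its partner injects S :&: C into N(S), hence
   |S| <= |N(S)| + |V| - 2 nu for every S, with equality only if every vertex
   exposed by M lies in S.  So a Tutte-Berge witness contains D(G), and D(G)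
   is independent.  Conversely, let S be the set of endpoints of even
   M-alternating paths starting at an M-exposed vertex.  Switching M along such
   a path exposes its endpoint, so S is contained in D(G) and is independent
   when D(G) is.  Independence of S makes every neighbour of S covered, with
   its partner in S (otherwise an alternating path could be extended), so the
   partner map is a bijection from S :&: C onto N(S) and S is a witness. *)

Section Graph.
Variables (T : finType) (e : rel T).
Hypotheses (e_sym : symmetric e) (e_irr : irreflexive e).

Implicit Types (M : {set {set T}}) (S : {set T}).

Lemma independentP S : reflect {in S &, forall x y, ~~ e x y} (independent e S).
Proof.
apply: (iffP forall_inP) => [h x y xS | h x xS]; first exact: (forall_inP (h x xS)).
by apply/forall_inP => y; apply: h.
Qed.

Lemma is_edge_inv E : is_edge e E -> exists x y, e x y /\ E = [set x; y].
Proof. by case/existsP=> x /existsP [y /andP [exy /eqP ->]]; exists x, y. Qed.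

Lemma is_edge_set2 x y : e x y -> is_edge e [set x; y].
Proof. by move=> exy; apply/existsP; exists x; apply/existsP; exists y; rewrite exy eqxx. Qed.

Lemma adj_of_is_edge_set2 x y : is_edge e [set x; y] -> e x y.
Proof.
case/is_edge_inv=> a [b [eab Exy]].
have ab : a != b by apply: contraTneq eab => ->; rewrite e_irr.
have : #|[set x; y]| = 2 by rewrite Exy cards2 ab.
rewrite cards2 => -[] /eqP xy.
have /set2P xab : x \in [set a; b] by rewrite -Exy set21.
have /set2P yab : y \in [set a; b] by rewrite -Exy set22.
by case: xab yab xy => -> [] -> //; rewrite ?eqxx // e_sym.
Qed.

Lemma matching_edge M E : matching e M -> E \in M -> is_edge e E.
Proof. by case/andP=> /forall_inP edgeM _; apply: edgeM. Qed.

Lemma matching_eq M E1 E2 x :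
  matching e M -> E1 \in M -> E2 \in M -> x \in E1 -> x \in E2 -> E1 = E2.
Proof.
case/andP=> _ /forall_inP disjM E1M E2M xE1 xE2; apply/eqP/negPn/negP => E12.
have /implyP/(_ E12) := forall_inP (disjM E1 E1M) E2 E2M.
by move/pred0P/(_ x); rewrite /= xE1 xE2.
Qed.

Lemma notin_coverP M x : reflect (forall E, E \in M -> x \notin E) (x \notin cover M).
Proof.
apply: (iffP idP) => [xM E EM | xM]; first by apply: contra xM => xE; apply/bigcupP; exists E.
by apply/bigcupP => -[E EM]; apply/negP/xM.
Qed.

Lemma set2_cover M x y : [set x; y] \in M -> x \in cover M /\ y \in cover M.
Proof. by move=> xyM; split; apply/bigcupP; exists [set x; y]; rewrite ?set21 ?set22. Qed.

Lemma card_cover M : matching e M -> #|cover M| = 2 * #|M|.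
Proof.
move=> mM.
have /eqP <- : trivIset M.
  apply/trivIsetP => A B AM BM AB; apply/pred0P => z /=.
  by apply/andP => -[zA zB]; move: AB; rewrite (matching_eq mM AM BM zA zB) eqxx.
rewrite mulnC -sum_nat_const; apply: eq_bigr => E EM.
have [a [b [eab ->]]] := is_edge_inv (matching_edge mM EM).
by rewrite cards2; case: eqP eab => // ->; rewrite e_irr.
Qed.

Lemma matching0 : matching e set0.
Proof. by apply/andP; split; apply/forall_inP => E; rewrite inE. Qed.

Lemma max_matching_exists : exists2 M, matching e M & #|M| = nu e.
Proof.
exists [arg max_(M > set0 | matching e M) #|M|].
  by case: arg_maxnP => //; apply: matching0.
by rewrite /nu (bigmax_eq_arg set0) //; apply: matching0.
Qed.

(* [partner M x] is only meaningful for [x] covered by [M]; otherwise it is [x]. *)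
Definition partner M x : T := odflt x [pick y | [set x; y] \in M].

Section Partner.
Variable M : {set {set T}}.
Hypothesis mM : matching e M.

Lemma partner_mem x : x \in cover M -> [set x; partner M x] \in M.
Proof.
case/bigcupP=> E EM xE.
have [a [b [_ Eab]]] := is_edge_inv (matching_edge mM EM).
have [y xyM] : exists y, [set x; y] \in M.
  by move: xE; rewrite Eab => /set2P [] ->; [exists b | exists a; rewrite setUC]; rewrite -Eab.
by rewrite /partner; case: pickP => [//|/(_ y)]; rewrite xyM.
Qed.

Lemma partner_adj x : x \in cover M -> e x (partner M x).
Proof. by move/partner_mem/(matching_edge mM)/adj_of_is_edge_set2. Qed.

Lemma partner_cover x : x \in cover M -> partner M x \in cover M.
Proof. by move/partner_mem/set2_cover => []. Qed.

Lemma partner_eq x y : [set x; y] \in M -> partner M x = y.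
Proof.
move=> xyM; have xC := (set2_cover xyM).1.
have E : [set x; y] = [set x; partner M x].
  by apply: (matching_eq mM xyM (partner_mem xC)); apply: set21.
have /set2P [yx|//] : y \in [set x; partner M x] by rewrite -E set22.
by move: (adj_of_is_edge_set2 (matching_edge mM xyM)); rewrite yx e_irr.
Qed.

Lemma partnerK x : x \in cover M -> partner M (partner M x) = x.
Proof. by move=> xC; apply: partner_eq; rewrite setUC partner_mem. Qed.

Lemma partner_inj : {in cover M &, injective (partner M)}.
Proof. by move=> x y xC yC Exy; rewrite -(partnerK xC) Exy partnerK. Qed.

Lemma partner_imset_nbhd S : partner M @: (S :&: cover M) \subset nbhd e S.
Proof.
apply/subsetP => _ /imsetP [x /setIP [xS xC] ->].
by rewrite inE; apply/existsP; exists x; rewrite xS partner_adj.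
Qed.

Lemma card_partner_imset S : #|partner M @: (S :&: cover M)| = #|S :&: cover M|.
Proof. by apply: card_in_imset; apply: sub_in2 partner_inj => x /setIP []. Qed.

Lemma card_setI_cover_le_nbhd S : #|S :&: cover M| <= #|nbhd e S|.
Proof. by rewrite -card_partner_imset subset_leq_card // partner_imset_nbhd. Qed.

Lemma card_nbhd_partner_closed S :
    (forall x, x \in nbhd e S -> x \in cover M /\ partner M x \in S) ->
  #|nbhd e S| = #|S :&: cover M|.
Proof.
move=> closedS; suff -> : nbhd e S = partner M @: (S :&: cover M).
  by rewrite card_partner_imset.
apply/eqP; rewrite eq_sym eqEsubset partner_imset_nbhd.
apply/subsetP => x /closedS [xC pxS]; apply/imsetP; exists (partner M x).
  by rewrite inE pxS partner_cover.
by rewrite partnerK.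
Qed.

End Partner.

Lemma exposed_sub_witness M S :
    matching e M -> #|M| = nu e -> #|S| + 2 * nu e = #|nbhd e S| + #|T| ->
  ~: cover M \subset S.
Proof.
move=> mM cM eqS.
have le := card_setI_cover_le_nbhd mM S.
have splitS := cardsID (cover M) S; have splitT := cardsC (cover M).
have cC := card_cover mM.
have sub : S :\: cover M \subset ~: cover M by apply/subsetP => x /setDP [_ xC]; rewrite inE.
have /eqP <- : S :\: cover M == ~: cover M by rewrite eqEcard sub /=; lia.
exact: subsetDl.
Qed.

Lemma Dset_sub_witness S :
  #|S| + 2 * nu e = #|nbhd e S| + #|T| -> Dset e \subset S.
Proof.
move=> eqS; apply/subsetP => x; rewrite inE => /existsP [M /andP [/andP [mM /eqP cM] xM]].
by apply: (subsetP (exposed_sub_witness mM cM eqS)); rewrite inE.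
Qed.

Lemma Dset_independent_of_tutte_berge :
  tutte_berge_graph e -> {in Dset e &, forall x y, ~~ e x y}.
Proof.
case=> S [/independentP indS eqS] x y xD yD.
by apply: indS; apply: (subsetP (Dset_sub_witness eqS)).
Qed.

(* An alternating path from [s] is encoded by the pairs [(a_i, b_i)] of its
   vertices [s, a_1, b_1, a_2, b_2, ...]; the edges [b_(i-1) a_i] (with
   [b_0 = s]) are any edges of the graph and the edges [a_i b_i] belong to [M]. *)
Fixpoint alt_path M s (ps : seq (T * T)) : bool :=
  if ps is (a, b) :: ps' then [&& e s a, [set a; b] \in M & alt_path M b ps'] else true.

Definition alt_verts (ps : seq (T * T)) : seq T := flatten [seq [:: p.1; p.2] | p <- ps].

Definition alt_end (s : T) (ps : seq (T * T)) : T := last s [seq p.2 | p <- ps].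

Lemma alt_path_cat M s ps1 ps2 :
  alt_path M s (ps1 ++ ps2) = alt_path M s ps1 && alt_path M (alt_end s ps1) ps2.
Proof. by elim: ps1 s => [|[a b] ps1 IH] s //=; rewrite IH !andbA. Qed.

Lemma alt_verts_cat ps1 ps2 : alt_verts (ps1 ++ ps2) = alt_verts ps1 ++ alt_verts ps2.
Proof. by rewrite /alt_verts map_cat flatten_cat. Qed.

Lemma alt_end_rcons s ps a b : alt_end s (rcons ps (a, b)) = b.
Proof. by rewrite /alt_end map_rcons last_rcons. Qed.

Lemma alt_path_sub M M' s ps :
    alt_path M s ps -> {in alt_verts ps, forall a b, [set a; b] \in M -> [set a; b] \in M'} ->
  alt_path M' s ps.
Proof.
elim: ps s => [|[a b] ps IH] s //= /and3P [esa abM pM] MM'.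
rewrite esa MM' ?inE ?eqxx //=; apply: IH => // a' a'ps.
by apply: MM'; rewrite /alt_verts /= !inE a'ps !orbT.
Qed.

Lemma mem_alt_verts ps x : x \in alt_verts ps ->
  exists ps1 a b ps2, ps = ps1 ++ (a, b) :: ps2 /\ (x = a \/ x = b).
Proof.
elim: ps => [|[a b] ps IH] //; rewrite /alt_verts /= !inE -/(alt_verts ps).
case/or3P => [/eqP -> | /eqP -> | /IH [ps1 [a' [b' [ps2 [-> xab]]]]]].
- by exists [::], a, b, ps; split; [|left].
- by exists [::], a, b, ps; split; [|right].
- by exists ((a, b) :: ps1), a', b', ps2.
Qed.

Lemma alt_path_prefix M s ps1 a b ps2 :
    alt_path M s (ps1 ++ (a, b) :: ps2) -> uniq (s :: alt_verts (ps1 ++ (a, b) :: ps2)) ->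
  [/\ alt_path M s (rcons ps1 (a, b)), uniq (s :: alt_verts (rcons ps1 (a, b))) &
      [set a; b] \in M].
Proof.
rewrite -cats1 !alt_path_cat /= !alt_verts_cat => /andP [-> /and3P [-> abM _]].
have -> : alt_verts ((a, b) :: ps2) = alt_verts [:: (a, b)] ++ alt_verts ps2 by [].
rewrite catA mem_cat cat_uniq negb_or abM.
by case/andP=> /andP [-> _] /andP [-> _].
Qed.

Definition switch M s a b : {set {set T}} := [set s; a] |: (M :\ [set a; b]).

Section Switch.
Variables (M : {set {set T}}) (s a b : T).
Hypotheses (mM : matching e M) (sM : s \notin cover M) (esa : e s a) (abM : [set a; b] \in M).

Lemma notin_other_edge y E : E \in M -> E != [set a; b] -> y \in [set a; b] -> y \notin E.
Proof.
move=> EM EabN yab; apply/negP => yE; move/eqP: EabN; apply.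
exact: matching_eq mM EM abM yE yab.
Qed.

Lemma switch_matching : matching e (switch M s a b).
Proof.
have disj_sa F : F \in M -> F != [set a; b] -> [disjoint [set s; a] & F].
  move=> FM FabN; apply/pred0P => z /=; apply/andP => -[/set2P [] -> zF].
    by move/notin_coverP/(_ F FM): sM; rewrite zF.
  by move: (notin_other_edge FM FabN (set21 a b)); rewrite zF.
apply/andP; split; apply/forall_inP => E1.
  by rewrite !inE => /orP [/eqP -> | /andP [_ /(matching_edge mM)]] //; apply: is_edge_set2.
rewrite !inE => E1M; apply/forall_inP => E2; rewrite !inE => E2M; apply/implyP.
case/orP: E1M => [/eqP -> | /andP [E1ab E1M]]; case/orP: E2M => [/eqP -> | /andP [E2ab E2M]].
- by rewrite eqxx.
- by move=> _; apply: disj_sa.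
- by move=> _; rewrite disjoint_sym disj_sa.
- by case/andP: mM => _ /forall_inP /(_ E1 E1M) /forall_inP /(_ E2 E2M) /implyP.
Qed.

Lemma card_switch : #|switch M s a b| = #|M|.
Proof.
rewrite cardsU1 (cardsD1 [set a; b] M) abM !inE negb_and; congr (_ + _).
by rewrite (_ : [set s; a] \notin M) ?orbT //; apply: contra sM => /set2_cover [].
Qed.

Lemma switch_exposed : b \notin cover (switch M s a b).
Proof.
apply/notin_coverP => E; rewrite !inE => /orP [/eqP -> | /andP [EabN EM]].
  rewrite !inE negb_or; apply/andP; split.
    by apply: contraNneq sM => <-; rewrite (set2_cover abM).2.
  by apply: contraTneq (adj_of_is_edge_set2 (matching_edge mM abM)) => ->; rewrite e_irr.
exact: notin_other_edge EM EabN (set22 a b).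
Qed.

End Switch.

Lemma alt_path_switch ps M s :
    matching e M -> s \notin cover M -> alt_path M s ps -> uniq (s :: alt_verts ps) ->
  exists2 M', matching e M' & #|M'| = #|M| /\ alt_end s ps \notin cover M'.
Proof.
elim: ps M s => [|[a b] ps IH] M s mM sM; first by exists M.
rewrite /= => /and3P [esa abM pM].
rewrite /alt_verts /= -/(alt_verts ps) !inE !negb_or -!andbA.
case/and5P=> _ _ _ _ /and3P [aps bps ups].
have pM' : alt_path (switch M s a b) b ps.
  apply: (alt_path_sub pM) => a' a'ps b' a'b'M; rewrite !inE a'b'M andbT.
  apply/orP; right; apply/eqP => E.
  have /set2P [a'a | a'b] : a' \in [set a; b] by rewrite -E set21.
  - by rewrite -a'a a'ps in aps.
  - by rewrite -a'b a'ps in bps.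
have ubps : uniq (b :: alt_verts ps) by rewrite /= bps.
have [M' mM' [cM' endM']] :=
  IH _ b (switch_matching mM sM esa abM) (switch_exposed mM sM abM) pM' ubps.
by exists M'; rewrite // cM' card_switch.
Qed.

Section EvenReach.
Variable M : {set {set T}}.
Hypothesis mM : matching e M.

Definition even_reach : {set T} :=
  [set v | excluded_middle_informative (exists s ps,
     [/\ s \notin cover M, alt_path M s ps, uniq (s :: alt_verts ps) & alt_end s ps = v])].

Lemma alt_end_even_reach s ps :
    s \notin cover M -> alt_path M s ps -> uniq (s :: alt_verts ps) ->
  alt_end s ps \in even_reach.
Proof. by move=> sM pM ups; rewrite inE; apply/sumboolP; exists s, ps. Qed.

Lemma exposed_even_reach x : x \notin cover M -> x \in even_reach.
Proof. by move=> xM; apply: (alt_end_even_reach (ps := [::])). Qed.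

Lemma even_reach_sub_Dset : #|M| = nu e -> even_reach \subset Dset e.
Proof.
move=> cM; apply/subsetP => v; rewrite inE => /sumboolP [s [ps [sM pM ups <-]]].
have [M' mM' [cM' endM']] := alt_path_switch mM sM pM ups.
by rewrite inE; apply/existsP; exists M'; rewrite /max_matching mM' cM' cM eqxx.
Qed.

Lemma alt_verts_even_reach s ps y :
    s \notin cover M -> alt_path M s ps -> uniq (s :: alt_verts ps) ->
    y \in cover M -> y \in s :: alt_verts ps ->
  (y \in even_reach) || (partner M y \in even_reach).
Proof.
move=> sM pM ups yM; rewrite inE => /orP [/eqP ys | ]; first by move: sM; rewrite -ys yM.
case/mem_alt_verts=> ps1 [a [b [ps2 [Eps yab]]]]; rewrite Eps in pM ups.
have [pM1 ups1 abM] := alt_path_prefix pM ups.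
have := alt_end_even_reach sM pM1 ups1; rewrite alt_end_rcons.
by case: yab => -> bR; rewrite ?(partner_eq mM abM) bR ?orbT.
Qed.

Lemma nbhd_even_reach : independent e even_reach ->
  forall x, x \in nbhd e even_reach -> x \in cover M /\ partner M x \in even_reach.
Proof.
move=> /independentP indR x; rewrite inE => /existsP [d /andP [dR edx]].
have xR : x \notin even_reach by apply: contraL edx => xR; apply: indR.
have xM : x \in cover M by apply: contraR xR; apply: exposed_even_reach.
split=> //; move: dR; rewrite inE => /sumboolP [s [ps [sM pM ups dE]]].
have [xps | xps] := boolP (x \in s :: alt_verts ps).
  by have := alt_verts_even_reach sM pM ups xM xps; rewrite (negbTE xR).
have [zps | zps] := boolP (partner M x \in s :: alt_verts ps).
  have := alt_verts_even_reach sM pM ups (partner_cover mM xM) zps.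
  by rewrite partnerK // (negbTE xR) orbF.
suff : alt_end s (rcons ps (x, partner M x)) \in even_reach by rewrite alt_end_rcons.
apply: alt_end_even_reach sM _ _.
  by rewrite -cats1 alt_path_cat pM /= dE edx partner_mem.
have xz : x != partner M x.
  by apply: contraTneq (partner_adj mM xM) => <-; rewrite e_irr.
rewrite -cats1 alt_verts_cat -cat_cons cat_uniq ups /= !inE xz.
by move: xps zps; rewrite !inE => /negbTE -> /negbTE ->.
Qed.

Lemma even_reach_witness : #|M| = nu e -> independent e even_reach ->
  #|even_reach| + 2 * nu e = #|nbhd e even_reach| + #|T|.
Proof.
move=> cM indR.
have cN := card_nbhd_partner_closed mM (nbhd_even_reach indR).
have exposedR : ~: cover M \subset even_reach.
  by apply/subsetP => x; rewrite inE; apply: exposed_even_reach.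
have splitR := cardsID (cover M) even_reach; have splitT := cardsC (cover M).
rewrite setDE (setIidPr exposedR) in splitR.
have := card_cover mM; lia.
Qed.

End EvenReach.

Lemma tutte_berge_of_Dset_independent :
  {in Dset e &, forall x y, ~~ e x y} -> tutte_berge_graph e.
Proof.
move=> indD; have [M mM cM] := max_matching_exists.
have indR : independent e (even_reach M).
  by apply/independentP; apply: sub_in2 indD; apply/subsetP/even_reach_sub_Dset.
by exists (even_reach M); split; last exact: even_reach_witness.
Qed.

End Graph.

Theorem theorem1p3 (T : finType) (e : rel T)
  (e_sym : symmetric e) (e_irr : irreflexive e) :
  tutte_berge_graph e <->
  (forall x y, x \in Dset e -> y \in Dset e -> ~~ e x y).
Proof.
split; first exact: Dset_independent_of_tutte_berge.
exact: tutte_berge_of_Dset_independent.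
Qed.
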